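(* Let $F$ be a nondyadic nonarchimedean local field with uniformizer $\pi$, maximal ideal $\mathfrak p$ and residue field $\mathfrak k$, and $A$ a quaternion $F$-algebra. Put $\varepsilon=0$ if $A$ is split, and if $A$ is ramified let $\varepsilon\in O_F^\times$ be such that $1-4\varepsilon\in O_F^\times\setminus O_F^{\times2}$. Let $\{1,x_1,x_2,x_3\}$ be an $F$-basis of $A$ with $x_1^2=x_1-\varepsilon$, $x_2^2=\pi$, $x_2x_1=(1-x_1)x_2$, $x_3=x_1x_2$. Let $n\ge3$, $r=\lfloor n/2\rfloor$, $s=\lfloor (n-1)/2\rfloor$, $\alpha\in\mathfrak p$, $\beta\in O_F$ (with $1+\beta\in O_F^\times$ if $A$ is split), $x_{\alpha\beta}=\alpha x_1+x_2+\beta x_3$, and $\mathcal O=O_F+O_Fx_{\alpha\beta}+O_F\pi^rx_1+O_F\pi^sx_3$ (a Bass order with Eichler invariant $0$ and $n(\mathcal O)=n$). Put $M=F(x_{\alpha\beta})$. Then $\mathrm{Nr}(\mathcal N(\mathcal O))=\mathrm{Nm}_{M/F}(M^\times)$ if and only if either (i) $A$ is split and $-1\in\mathfrak k^{\times2}$, or (ii) $A$ is ramified and $-1\notin\mathfrak k^{\times2}$.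
   Context: $\mathcal N(\mathcal O)$ is the normalizer of $\mathcal O$ in $A^\times$, $\mathrm{Nr}$ the reduced norm, $\mathrm{Nm}_{M/F}$ the field norm. Nondyadic means residue characteristic $\ne2$. *)

From mathcomp Require Import all_boot all_order all_algebra.
Set Implicit Arguments. Unset Strict Implicit. Unset Printing Implicit Defensive.
Import Order.TTheory GRing.Theory Num.Theory.
Local Open Scope ring_scope.

(* Nonarchimedean local fields, given by a normalized discrete         *)
(* valuation v : F -> int (only its values on nonzero elements matter). *)
Section Valuation.
Variables (F : fieldType) (v : F -> int).

Definition vint (x : F) : Prop := x = 0 \/ 0 <= v x.
Definition vmax (x : F) : Prop := x = 0 \/ 0 < v x.
Definition vunit (x : F) : Prop := x != 0 /\ v x = 0.

Definition vcauchy (u : nat -> F) : Prop :=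
  forall N : int, exists K : nat, forall m k : nat, (K <= m)%N -> (K <= k)%N ->
    u m - u k = 0 \/ N <= v (u m - u k).
Definition vconverges (u : nat -> F) (l : F) : Prop :=
  forall N : int, exists K : nat, forall m : nat, (K <= m)%N ->
    u m - l = 0 \/ N <= v (u m - l).

Record nondyadic_local_field : Prop := {
  v_mul : forall x y, x != 0 -> y != 0 -> v (x * y) = v x + v y;
  v_add : forall x y, x != 0 -> y != 0 -> x + y != 0 ->
            (v x <= v (x + y)) || (v y <= v (x + y));
  v_normalized : exists p : F, p != 0 /\ v p = 1;
  v_complete : forall u, vcauchy u -> exists l, vconverges u l;
  v_residue_finite : exists s : seq F, (forall y, y \in s -> vint y) /\
            (forall x, vint x -> exists2 y, y \in s & vmax (x - y));
  v_nondyadic : vunit 2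
}.

(* -1 is a square in the residue field k (then automatically in k^x) *)
Definition minus1_sq_residue : Prop := exists u : F, vint u /\ vmax (u ^+ 2 + 1).

End Valuation.

(* The quaternion algebra A with F-basis {1, x1, x2, x3} and           *)
(*   x1^2 = x1 - eps, x2^2 = pi, x2 x1 = (1 - x1) x2, x3 = x1 x2.       *)
(* Element Quat a0 a1 a2 a3 stands for a0 + a1 x1 + a2 x2 + a3 x3.      *)
(* Writing K = F + F x1, an element is u + w x2 with u = a0 + a1 x1,    *)
(* w = a2 + a3 x1, and x2 k = kbar x2 for k in K.                       *)
Record quat (F : Type) := Quat { q0 : F; q1 : F; q2 : F; q3 : F }.

Section Quaternion.
Variables (F : fieldType) (eps pi : F).

(* arithmetic in K = F[x1]/(x1^2 - x1 + eps), pairs (a,b) = a + b x1 *)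
Definition Kmul (p q : F * F) : F * F :=
  (p.1 * q.1 - eps * (p.2 * q.2), p.1 * q.2 + p.2 * q.1 + p.2 * q.2).
Definition Kconj (p : F * F) : F * F := (p.1 + p.2, - p.2).
Definition Kadd (p q : F * F) : F * F := (p.1 + q.1, p.2 + q.2).
Definition Kscale (c : F) (p : F * F) : F * F := (c * p.1, c * p.2).

Definition qadd (x y : quat F) : quat F :=
  Quat (q0 x + q0 y) (q1 x + q1 y) (q2 x + q2 y) (q3 x + q3 y).
Definition qscale (c : F) (x : quat F) : quat F :=
  Quat (c * q0 x) (c * q1 x) (c * q2 x) (c * q3 x).
Definition qs (c : F) : quat F := Quat c 0 0 0.
Definition qone : quat F := qs 1.
Definition qx1 : quat F := Quat 0 1 0 0.
Definition qx2 : quat F := Quat 0 0 1 0.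
Definition qx3 : quat F := Quat 0 0 0 1.

(* (u + w x2)(u' + w' x2) = (u u' + pi w w'bar) + (w u'bar + u w') x2 *)
Definition qmul (x y : quat F) : quat F :=
  let u := (q0 x, q1 x) in let w := (q2 x, q3 x) in
  let u' := (q0 y, q1 y) in let w' := (q2 y, q3 y) in
  let a := Kadd (Kmul u u') (Kscale pi (Kmul w (Kconj w'))) in
  let b := Kadd (Kmul w (Kconj u')) (Kmul u w') in
  Quat a.1 a.2 b.1 b.2.

(* standard involution: 1 -> 1, x1 -> 1 - x1, x2 -> -x2, x3 -> -x3 *)
Definition qconj (x : quat F) : quat F :=
  Quat (q0 x + q1 x) (- q1 x) (- q2 x) (- q3 x).

Definition Nr (x : quat F) : F := q0 (qmul x (qconj x)).
Definition Trd (x : quat F) : F := q0 (qadd x (qconj x)).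

End Quaternion.

Section Order_.
Variables (F : fieldType) (v : F -> int) (eps pi alpha beta : F) (n : nat).

Definition xab : quat F := Quat 0 alpha 1 beta.

Definition inO (y : quat F) : Prop :=
  exists c0 c1 c2 c3 : F, [/\ vint v c0, vint v c1, vint v c2 & vint v c3] /\
    y = qadd (qadd (qs c0) (qscale c1 xab))
             (qadd (qscale (c2 * pi ^+ n./2) (qx1 F))
                   (qscale (c3 * pi ^+ (n.-1)./2) (qx3 F))).

Definition inNormalizer (g : quat F) : Prop :=
  exists h : quat F,
    [/\ qmul eps pi g h = qone F, qmul eps pi h g = qone F &
        forall y, inO y <-> inO (qmul eps pi (qmul eps pi g y) h)].

Definition NrNormalizer (c : F) : Prop :=
  exists g, inNormalizer g /\ c = Nr eps pi g.

(* M = F(x_ab) = F + F x_ab inside A; x_ab has minimal polynomial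
   X^2 - Trd(x_ab) X + Nr(x_ab), and the field norm of a + b x_ab is the
   determinant of multiplication by it on the basis {1, x_ab}, namely
   a^2 + a b Trd(x_ab) + b^2 Nr(x_ab). *)
Definition NmM (a b : F) : F :=
  a ^+ 2 + a * b * Trd (xab) + b ^+ 2 * Nr eps pi xab.

Definition NmMunits (c : F) : Prop :=
  exists a b : F, (a != 0 \/ b != 0) /\ c = NmM a b.

End Order_.

From mathcomp Require Import all_boot all_order all_algebra.
From mathcomp Require Import ring zify boolp.
Set Implicit Arguments. Unset Strict Implicit. Unset Printing Implicit Defensive.
Import Order.TTheory GRing.Theory Num.Theory.
Local Open Scope ring_scope.

(** Put δ = x_αβ − α/2, so that M = F(δ), δ² = −πU with U a unit, and
    Nm_{M/F}(A + Bδ) = A² + πU·B².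

    Every element of M^× normalizes O: after rescaling by A² or πB², conjugation by
    A + Bδ is a combination, with integral coefficients and a unit denominator, of the
    identity, of the commutator with δ and of conjugation by δ, and each of these
    preserves O. The element ω = Uθ + αdδ/π, with θ = x1 − 1/2 and d = θ² = 1/4 − ε,
    anticommutes with δ, normalizes O, and has unit norm Nr ω ≡ −d·Nm(1 + βx1)² mod 𝔭.

    Conversely, for g ∈ N(O) the element z = gδg⁻¹ of O has trace 0 and norm πU, which
    forces its δ-coordinate to be ±1 mod 𝔭. Accordingly k = δ + z or k = (δ − z)ω
    satisfies kδ = zk and Nr k ∈ Nm(M^×) (in the second case provided Nr ω is a norm).
    Then k̄g commutes with δ, hence lies in M, and Nr g ∈ Nm(M^×).

    So Nr(N(O)) = Nm_{M/F}(M^×) iff Nr ω is a norm, iff −d (equivalently −(1 − 4ε)) is a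
    square mod 𝔭, by Hensel's lemma. For ε = 0 this says that −1 is a square in 𝔨; when
    A is ramified, 1 − 4ε is a nonsquare unit, and in the finite field 𝔨 the product of
    two nonsquares is a square. *)

Lemma imset_eq_setD (T : finType) (U Q : {set T}) (f : T -> T) :
    Q \subset U -> (#|U| <= #|Q| + #|Q|)%N -> {in Q &, injective f} ->
    {in Q, forall c, f c \in U :\: Q} -> f @: Q = U :\: Q.
Proof.
move=> QU cardU f_inj fQ; apply/eqP; rewrite eqEcard; apply/andP; split.
  by apply/subsetP => _ /imsetP[c cQ ->]; exact: fQ.
have : #|U| = (#|Q| + #|U :\: Q|)%N by rewrite -(cardsID Q U) (setIidPr QU).
rewrite (card_in_imset f_inj); lia.
Qed.

Ltac field_nz := field; do ?[apply/andP; split]; try assumption.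

Lemma quat_eq (F : Type) (x y : quat F) :
  q0 x = q0 y -> q1 x = q1 y -> q2 x = q2 y -> q3 x = q3 y -> x = y.
Proof. by case: x => ????; case: y => ???? /= -> -> -> ->. Qed.

Lemma qmulE (F : fieldType) (eps pi : F) (x y : quat F) : qmul eps pi x y = Quat
  (q0 x * q0 y - eps * (q1 x * q1 y) + pi * (q2 x * (q2 y + q3 y) - eps * (q3 x * - q3 y)))
  (q0 x * q1 y + q1 x * q0 y + q1 x * q1 y
     + pi * (q2 x * - q3 y + q3 x * (q2 y + q3 y) + q3 x * - q3 y))
  (q2 x * (q0 y + q1 y) - eps * (q3 x * - q1 y) + (q0 x * q2 y - eps * (q1 x * q3 y)))
  (q2 x * - q1 y + q3 x * (q0 y + q1 y) + q3 x * - q1 y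
     + (q0 x * q3 y + q1 x * q2 y + q1 x * q3 y)).
Proof. by case: x; case: y. Qed.

Ltac quat_ring := apply: quat_eq; rewrite ?qmulE; cbn [q0 q1 q2 q3 qconj qscale qadd qs qone]; ring.

Section Quaternion.
Variables (F : fieldType) (eps pi : F).
Local Notation mul := (qmul eps pi).
Local Notation nr := (Nr eps pi).

Definition qcomm (x y : quat F) := qadd (mul x y) (qscale (-1) (mul y x)).

Lemma qmulA x y z : mul (mul x y) z = mul x (mul y z). Proof. quat_ring. Qed.
Lemma qmulDl x y z : mul (qadd x y) z = qadd (mul x z) (mul y z). Proof. quat_ring. Qed.
Lemma qmulDr x y z : mul x (qadd y z) = qadd (mul x y) (mul x z). Proof. quat_ring. Qed.
Lemma qmulZl c x y : mul (qscale c x) y = qscale c (mul x y). Proof. quat_ring. Qed.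
Lemma qmulZr c x y : mul x (qscale c y) = qscale c (mul x y). Proof. quat_ring. Qed.
Lemma qmul_qsr c y : mul y (qs c) = qscale c y. Proof. quat_ring. Qed.
Lemma qmul1q x : mul (qone F) x = x. Proof. quat_ring. Qed.
Lemma qmulq1 x : mul x (qone F) = x. Proof. quat_ring. Qed.
Lemma qscaleA c c' (x : quat F) : qscale c (qscale c' x) = qscale (c * c') x. Proof. quat_ring. Qed.
Lemma qscale1 (x : quat F) : qscale 1 x = x. Proof. quat_ring. Qed.
Lemma qaddC (x y : quat F) : qadd x y = qadd y x. Proof. quat_ring. Qed.
Lemma qconjM x y : qconj (mul x y) = mul (qconj y) (qconj x). Proof. quat_ring. Qed.
Lemma qconjZ c (x : quat F) : qconj (qscale c x) = qscale c (qconj x). Proof. quat_ring. Qed.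
Lemma qmul_conj x : mul x (qconj x) = qs (nr x). Proof. rewrite /Nr; quat_ring. Qed.
Lemma qconj_mul x : mul (qconj x) x = qs (nr x). Proof. rewrite /Nr; quat_ring. Qed.

Lemma NrM x y : nr (mul x y) = nr x * nr y.
Proof. rewrite /Nr !qmulE; cbn [q0 q1 q2 q3 qconj]; ring. Qed.
Lemma NrZ c x : nr (qscale c x) = c ^+ 2 * nr x.
Proof. rewrite /Nr !qmulE; cbn [q0 q1 q2 q3 qconj qscale]; ring. Qed.
Lemma Nr_conj x : nr (qconj x) = nr x.
Proof. rewrite /Nr !qmulE; cbn [q0 q1 q2 q3 qconj]; ring. Qed.
Lemma Nr_qone : nr (qone F) = 1.
Proof. rewrite /Nr qmulE; cbn; ring. Qed.

Lemma TrdC x y : Trd (mul x y) = Trd (mul y x).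
Proof. rewrite /Trd !qmulE; cbn [q0 q1 q2 q3 qconj qadd]; ring. Qed.

Lemma Trd0_q1 (z : quat F) : Trd z = 0 -> q1 z = - (2%:R * q0 z).
Proof. by move=> h; apply/eqP; rewrite -subr_eq0 -h /Trd /=; apply/eqP; ring. Qed.

Lemma qmul_Trd0 z : Trd z = 0 -> mul z z = qs (- nr z).
Proof. move/Trd0_q1 => h1; rewrite /Nr; apply: quat_eq; rewrite !qmulE /= h1; ring. Qed.

Lemma qconj_Trd0 (z : quat F) : Trd z = 0 -> qconj z = qscale (-1) z.
Proof. move/Trd0_q1 => h1; apply: quat_eq; rewrite /= ?h1; ring. Qed.

Lemma Nr_neq0_of_inv g h : mul g h = qone F -> nr g != 0.
Proof.
move/(congr1 nr); rewrite NrM Nr_qone => e; apply/eqP => g0.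
by move: e; rewrite g0 mul0r => /eqP; rewrite eq_sym oner_eq0.
Qed.

Definition qconjg m y := qscale (nr m)^-1 (mul (mul m y) (qconj m)).

Lemma qconjgD m y z : qconjg m (qadd y z) = qadd (qconjg m y) (qconjg m z).
Proof. rewrite /qconjg; quat_ring. Qed.

Lemma qconjgZ m c y : qconjg m (qscale c y) = qscale c (qconjg m y).
Proof. rewrite /qconjg; quat_ring. Qed.

Lemma qconjg_qs m c : nr m != 0 -> qconjg m (qs c) = qs c.
Proof.
move=> nm; rewrite /qconjg qmul_qsr qmulZl qmul_conj.
by apply: quat_eq; cbn; field.
Qed.

Lemma qconjg_byM m1 m2 y : nr m1 != 0 -> nr m2 != 0 ->
  qconjg (mul m1 m2) y = qconjg m1 (qconjg m2 y).
Proof.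
move=> n1 n2; rewrite /qconjg NrM qconjM qmulZr qmulZl !qscaleA !qmulA.
by rewrite invfM mulrC.
Qed.

Lemma qconjg_byZ c m y : c != 0 -> qconjg (qscale c m) y = qconjg m y.
Proof.
move=> nc; have [m0|nm] := eqVneq (nr m) 0.
  by rewrite /qconjg NrZ m0 mulr0 !invr0; apply: quat_eq; cbn; ring.
rewrite /qconjg NrZ qconjZ qmulZr !qmulZl !qscaleA.
by congr (qscale _ _); move: (nr m) nm => N nN; field_nz.
Qed.

Lemma qconjg_by_qs c y : c != 0 -> qconjg (qs c) y = y.
Proof.
move=> nc; have -> : qs c = qscale c (qone F) by quat_ring.
by rewrite qconjg_byZ // /qconjg Nr_qone invr1 qscale1; quat_ring.
Qed.

Lemma qconjg_by_conjK m y : nr m != 0 -> qconjg (qconj m) (qconjg m y) = y.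
Proof. by move=> nm; rewrite -qconjg_byM ?Nr_conj // qconj_mul qconjg_by_qs. Qed.

Lemma qconjg_comm m x : nr m != 0 -> mul m x = mul x m -> qconjg m x = x.
Proof.
by move=> nm mx; rewrite /qconjg mx qmulA qmul_conj qmul_qsr qscaleA mulVf ?qscale1.
Qed.

Lemma qconjg_anticomm m x : nr m != 0 -> mul m x = qscale (-1) (mul x m) ->
  qconjg m x = qscale (-1) x.
Proof.
move=> nm mx; rewrite /qconjg mx qmulZl qmulA qmul_conj qmul_qsr !qscaleA.
by rewrite mulrAC mulVf ?mul1r.
Qed.

Lemma sandwich_Trd0 d A B y : Trd d = 0 ->
  mul (mul (qadd (qs A) (qscale B d)) y) (qconj (qadd (qs A) (qscale B d))) =
  qadd (qadd (qscale (A ^+ 2) y) (qscale (A * B) (qcomm d y)))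
       (qscale (- B ^+ 2) (mul (mul d y) d)).
Proof. move/Trd0_q1 => h1; apply: quat_eq; rewrite !qmulE /= ?h1; ring. Qed.

Lemma normalizer_of_qconjg (O : quat F -> Prop) g : nr g != 0 ->
  (forall y, O y -> O (qconjg g y)) -> (forall y, O y -> O (qconjg (qconj g) y)) ->
  exists h, [/\ mul g h = qone F, mul h g = qone F & forall y, O y <-> O (mul (mul g y) h)].
Proof.
move=> ng Og Og'; exists (qscale (nr g)^-1 (qconj g)); split.
- by rewrite qmulZr qmul_conj; apply: quat_eq; cbn; field.
- by rewrite qmulZl qconj_mul; apply: quat_eq; cbn; field.
move=> y; rewrite qmulZr -/(qconjg g y); split; first exact: Og.
by move=> hy; rewrite -(qconjg_by_conjK y ng); apply: Og'.
Qed.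

End Quaternion.

Section Valuation.
Variables (F : fieldType) (v : F -> int).
Hypothesis HF : nondyadic_local_field v.

Let vM := v_mul HF.
Let two_neq0 : (2%:R : F) != 0 := (v_nondyadic HF).1.
Let four_neq0 : (4%:R : F) != 0.
Proof. by rewrite (_ : 4%:R = 2%:R * 2%:R) ?mulf_neq0 // -natrM. Qed.

Lemma v1 : v 1 = 0.
Proof. have h : v 1 = v 1 + v 1 by rewrite -vM ?oner_neq0 // mulr1. lia. Qed.

Lemma vN x : v (- x) = v x.
Proof.
have [->|nx] := eqVneq x 0; first by rewrite oppr0.
have n1 : (-1 : F) != 0 by rewrite oppr_eq0 oner_neq0.
have h : v 1 = v (-1) + v (-1) by rewrite -vM // mulrNN mulr1.
by rewrite -mulN1r vM //; move: h; rewrite v1; lia.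
Qed.

Lemma vV x : x != 0 -> v x^-1 = - v x.
Proof.
move=> nx; have h : v 1 = v x + v x^-1 by rewrite -vM ?invr_neq0 // mulfV.
by move: h; rewrite v1; lia.
Qed.

Lemma vX x k : x != 0 -> v (x ^+ k) = v x *+ k.
Proof.
move=> nx; elim: k => [|k IH]; first by rewrite expr0 v1.
by rewrite exprS vM ?expf_neq0 // IH mulrS.
Qed.

Lemma vD_ge_min x y : x != 0 -> y != 0 -> x + y != 0 ->
  Order.min (v x) (v y) <= v (x + y).
Proof. by move=> nx ny nxy; case/orP: (v_add HF nx ny nxy) => h; rewrite ge_min h ?orbT. Qed.

Lemma vint0 : vint v 0. Proof. by left. Qed.
Lemma vint1 : vint v 1. Proof. by right; rewrite v1. Qed.

Lemma vintN x : vint v x -> vint v (- x).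
Proof. by case=> [->|h]; [left; rewrite oppr0 | right; rewrite vN]. Qed.

Lemma vintD x y : vint v x -> vint v y -> vint v (x + y).
Proof.
have [->|nx] := eqVneq x 0; first by rewrite add0r.
have [->|ny] := eqVneq y 0; first by rewrite addr0.
have [->|nxy] := eqVneq (x + y) 0; first by left.
case=> [x0|hx]; first by rewrite x0 eqxx in nx.
case=> [y0|hy]; first by rewrite y0 eqxx in ny.
by right; apply: le_trans (vD_ge_min nx ny nxy); rewrite le_min hx hy.
Qed.

Lemma vintB x y : vint v x -> vint v y -> vint v (x - y).
Proof. by move=> hx hy; apply: vintD => //; apply: vintN. Qed.

Lemma vintM x y : vint v x -> vint v y -> vint v (x * y).
Proof.
have [->|nx] := eqVneq x 0; first by rewrite mul0r.
have [->|ny] := eqVneq y 0; first by rewrite mulr0.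
case=> [x0|hx]; first by rewrite x0 eqxx in nx.
case=> [y0|hy]; first by rewrite y0 eqxx in ny.
by right; rewrite vM // addr_ge0.
Qed.

Lemma vintX x k : vint v x -> vint v (x ^+ k).
Proof. by move=> h; elim: k => [|k IH]; rewrite ?exprS; [exact: vint1 | apply: vintM]. Qed.

Lemma vint_nat k : vint v k%:R.
Proof.
by elim: k => [|k IH]; rewrite ?mulrS; [exact: vint0 | apply: vintD => //; exact: vint1].
Qed.

Lemma vunit_vint x : vunit v x -> vint v x.
Proof. by case=> _ h; right; rewrite h. Qed.

Lemma vunitV x : vunit v x -> vunit v x^-1.
Proof. by case=> nx h; split; [rewrite invr_eq0 | rewrite vV // h oppr0]. Qed.

Lemma vunitV_vint x : vunit v x -> vint v x^-1.
Proof. by move/vunitV/vunit_vint. Qed.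

Lemma vunitM x y : vunit v x -> vunit v y -> vunit v (x * y).
Proof. by case=> nx hx [ny hy]; split; [rewrite mulf_neq0 | rewrite vM // hx hy]. Qed.

Lemma vunitN x : vunit v x -> vunit v (- x).
Proof. by case=> nx hx; split; [rewrite oppr_eq0 | rewrite vN]. Qed.

Lemma vunit1 : vunit v 1. Proof. by split; [exact: oner_neq0 | exact: v1]. Qed.

Lemma vint_inv2 : vint v 2%:R^-1. Proof. exact: vunitV_vint (v_nondyadic HF). Qed.

Lemma vunit_of_sqr x : vunit v (x ^+ 2) -> vunit v x.
Proof.
case=> nx hx; have nx0 : x != 0 by move: nx; rewrite expf_eq0.
by split => //; move: hx; rewrite vX //; lia.
Qed.

Lemma vunit_sqr x : vunit v x -> vunit v (x ^+ 2).
Proof. by move=> ux; rewrite expr2; exact: vunitM. Qed.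

Variable pi : F.
Hypothesis Hpi : pi != 0 /\ v pi = 1.
Let pi_neq0 := Hpi.1.

Lemma v_piX k : v (pi ^+ k) = k%:Z.
Proof. rewrite vX // Hpi.2; elim: k => [//|k IH]; rewrite mulrS IH; lia. Qed.

Lemma vint_pi : vint v pi. Proof. by right; rewrite Hpi.2. Qed.

Lemma vmaxE x : vmax v x <-> vint v (x / pi).
Proof.
have [->|nx] := eqVneq x 0; first by rewrite mul0r; split=> _; left.
have nxp : x / pi != 0 by rewrite mulf_neq0 ?invr_eq0.
rewrite /vmax /vint vM ?invr_eq0 // vV // Hpi.2.
split; case=> [x0|h].
- by rewrite x0 eqxx in nx.
- by right; lia.
- by rewrite x0 eqxx in nxp.
- by right; lia.
Qed.

Lemma vmax_piM y : vint v y -> vmax v (pi * y).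
Proof. by move=> h; apply/vmaxE; rewrite mulrC mulKf. Qed.

Lemma vmaxP x : vmax v x -> exists2 y, vint v y & x = pi * y.
Proof. by move/vmaxE=> h; exists (x / pi) => //; rewrite mulrC mulfVK. Qed.

Lemma vmax_vint x : vmax v x -> vint v x.
Proof. by case=> [->|h]; [left | right; apply: ltW]. Qed.

Lemma vmaxD x y : vmax v x -> vmax v y -> vmax v (x + y).
Proof. by move=> /vmaxE hx /vmaxE hy; apply/vmaxE; rewrite mulrDl; apply: vintD. Qed.

Lemma vmaxN x : vmax v x -> vmax v (- x).
Proof. by move=> /vmaxE hx; apply/vmaxE; rewrite mulNr; apply: vintN. Qed.

Lemma vmaxB x y : vmax v x -> vmax v y -> vmax v (x - y).
Proof. by move=> hx hy; apply: vmaxD => //; apply: vmaxN. Qed.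

Lemma vmaxM x y : vint v x -> vmax v y -> vmax v (x * y).
Proof. by move=> hx /vmaxE hy; apply/vmaxE; rewrite -mulrA; apply: vintM. Qed.

Lemma vint_maxVunit x : vint v x -> vmax v x \/ vunit v x.
Proof.
case=> [->|h]; first by left; left.
have [->|nx] := eqVneq x 0; first by left; left.
by move: h; rewrite le_eqVlt => /orP[/eqP h|h]; [right; split | left; right].
Qed.

Lemma vunit_notmax x : vunit v x -> ~ vmax v x.
Proof. by case=> nx hx [x0|h]; [rewrite x0 eqxx in nx | rewrite hx ltxx in h]. Qed.

Lemma vunitDmax x y : vunit v x -> vmax v y -> vunit v (x + y).
Proof.
move=> ux my; have [h|uxy] := vint_maxVunit (vintD (vunit_vint ux) (vmax_vint my)) => //.
by case: (vunit_notmax ux); rewrite -(addrK y x); apply: vmaxB.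
Qed.

Lemma vmax_primeM x y : vint v x -> vint v y -> vmax v (x * y) -> vmax v x \/ vmax v y.
Proof.
move=> /vint_maxVunit[hx|ux]; first by left.
move=> /vint_maxVunit[hy|uy]; first by right.
by move/(vunit_notmax (vunitM ux uy)).
Qed.

Lemma vint_divVmax x y : x != 0 -> y != 0 -> vint v (y / x) \/ vmax v (x / y).
Proof.
move=> nx ny; rewrite /vint /vmax !vM ?invr_neq0 // !vV //.
by have [h|h] := lerP 0 (v y - v x); [left; right | right; right]; lia.
Qed.

Lemma v_sqr_pi_unit x u : x != 0 -> vunit v u -> v (x ^+ 2 * (pi * u)) != 0.
Proof. by move=> nx [nu vu]; rewrite vM ?mulf_neq0 ?expf_neq0 // vM // vu vX // Hpi.2; lia. Qed.

Lemma sqr_neq_pi_unit x u : vunit v u -> x ^+ 2 != pi * u.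
Proof.
move=> uu; have [->|nx] := eqVneq x 0; first by rewrite expr0n eq_sym mulf_neq0 //; case: uu.
apply/eqP => e; move: (v_sqr_pi_unit (invr_neq0 nx) uu).
by rewrite -e -exprMn mulVf // expr1n v1 eqxx.
Qed.

Lemma vunit_of_sqrM x u : vunit v u -> vunit v (x ^+ 2 * u) -> vunit v x.
Proof.
move=> [nu vu] [nxu]; rewrite mulf_eq0 negb_or expf_eq0 /= in nxu.
by case/andP: nxu => nx _; rewrite vM ?expf_neq0 // vu vX // => h; split => //; lia.
Qed.

Definition pdvd (k : nat) (x : F) := vint v (x / pi ^+ k).

Lemma pdvdE k x : pdvd k x <-> x = 0 \/ k%:Z <= v x.
Proof.
have np := expf_neq0 k pi_neq0.
have [->|nx] := eqVneq x 0; first by rewrite /pdvd mul0r; split=> _; left.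
have nxp : x / pi ^+ k != 0 by rewrite mulf_neq0 ?invr_eq0.
rewrite /pdvd /vint vM ?invr_eq0 // vV // v_piX.
split; case=> [x0|h].
- by rewrite x0 eqxx in nxp.
- by right; lia.
- by rewrite x0 eqxx in nx.
- by right; lia.
Qed.

Lemma pdvdD k x y : pdvd k x -> pdvd k y -> pdvd k (x + y).
Proof. by rewrite /pdvd mulrDl; apply: vintD. Qed.

Lemma pdvdN k x : pdvd k x -> pdvd k (- x).
Proof. by rewrite /pdvd mulNr; apply: vintN. Qed.

Lemma pdvdB k x y : pdvd k x -> pdvd k y -> pdvd k (x - y).
Proof. by move=> hx hy; apply: pdvdD => //; apply: pdvdN. Qed.

Lemma pdvdM j k x y : pdvd j x -> pdvd k y -> pdvd (j + k) (x * y).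
Proof. by rewrite /pdvd exprD invfM mulrACA; exact: vintM. Qed.

Lemma pdvd0 x : pdvd 0 x <-> vint v x.
Proof. by rewrite /pdvd expr0 invr1 mulr1. Qed.

Lemma pdvd1 x : pdvd 1 x <-> vmax v x.
Proof. by rewrite /pdvd expr1 vmaxE. Qed.

Lemma pdvdW j k x : (j <= k)%N -> pdvd k x -> pdvd j x.
Proof.
move=> le /pdvdE[->|h]; apply/pdvdE; [by left | right].
by apply: le_trans h; rewrite lez_nat.
Qed.

Lemma pdvd_vintM k x y : vint v x -> pdvd k y -> pdvd k (x * y).
Proof. by move=> /pdvd0 hx hy; have := pdvdM hx hy. Qed.

Lemma pdvd_all_eq0 x : (forall k, pdvd k x) -> x = 0.
Proof. by move=> h; have /pdvdE[//|] := h `|v x|.+1%N; lia. Qed.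

Fixpoint newton_sqrt (u : F) (k : nat) : F :=
  if k is k'.+1 then (newton_sqrt u k' + u / newton_sqrt u k') / 2%:R else 1.

Section SquareRoot.
Variable u : F.
Hypothesis u_cong1 : vmax v (u - 1).
Local Notation w := (newton_sqrt u).

Let vint_newton_coef k : vunit v (w k) -> vint v (2%:R^-1 * (w k)^-1).
Proof. by move=> uk; apply: vintM; [exact: vint_inv2 | exact: vunitV_vint]. Qed.

Lemma newton_sqrt_incr k : w k != 0 ->
  w k.+1 - w k = - (w k ^+ 2 - u) * (2%:R^-1 * (w k)^-1).
Proof. by move=> nk /=; field; rewrite nk two_neq0. Qed.

Lemma newton_sqrt_err k : w k != 0 ->
  w k.+1 ^+ 2 - u = (2%:R^-1 * (w k)^-1) ^+ 2 * (w k ^+ 2 - u) ^+ 2.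
Proof. by move=> nk /=; field; rewrite nk two_neq0. Qed.

Lemma newton_sqrt_inv k :
  [/\ vunit v (w k), vmax v (w k - 1) & pdvd k.+1 (w k ^+ 2 - u)].
Proof.
elim: k => [|k [uk mk dk]].
  split; [exact: vunit1 | by rewrite subrr; left |].
  by rewrite /= expr1n -opprB; apply/pdvd1/vmaxN.
have nk : w k != 0 by case: uk.
have m_incr : vmax v (w k.+1 - w k).
  rewrite newton_sqrt_incr // mulrC; apply: vmaxM; first exact: vint_newton_coef.
  by apply/pdvd1; apply: (pdvdW (k := k.+1)) => //; apply: pdvdN.
split.
- by rewrite -(subrK (w k) (w k.+1)) addrC; apply: vunitDmax.
- by rewrite -(subrK (w k) (w k.+1)) -addrA; apply: vmaxD.
- rewrite newton_sqrt_err //; apply: pdvd_vintM; first by apply: vintX; exact: vint_newton_coef.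
  by apply: (pdvdW (k := k.+1 + k.+1)); [lia | rewrite expr2; apply: pdvdM].
Qed.

Lemma newton_sqrt_cauchy k m : (k <= m)%N -> pdvd k.+1 (w m - w k).
Proof.
elim: m => [|m IH]; first by rewrite leqn0 => /eqP ->; rewrite subrr; apply/pdvdE; left.
rewrite leq_eqVlt => /orP[/eqP <-|lt]; first by rewrite subrr; apply/pdvdE; left.
rewrite -(subrK (w m) (w m.+1)) -addrA; apply: pdvdD; last exact: IH.
have [um _ dm] := newton_sqrt_inv m; have nm : w m != 0 by case: um.
rewrite newton_sqrt_incr // mulrC; apply: pdvd_vintM; first exact: vint_newton_coef.
by apply: (pdvdW (k := m.+1)) => //; apply: pdvdN.
Qed.

Lemma sqrt_cong1 : exists l, l ^+ 2 = u.
Proof.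
have [l hl] : exists l, vconverges v w l.
  apply: (v_complete HF) => N; exists `|N|%N => m k hm hk.
  have : pdvd `|N|%N.+1 (w m - w k).
    have -> : w m - w k = (w m - w `|N|%N) - (w k - w `|N|%N) by ring.
    by apply: pdvdB; apply: newton_sqrt_cauchy.
  by case/pdvdE => [->|h]; [left | right; lia].
exists l; apply/eqP; rewrite -subr_eq0; apply/eqP; apply: pdvd_all_eq0 => j.
have [M hM] := hl j%:Z; pose m := maxn M j.
have lm : pdvd j (w m - l) by apply/pdvdE; apply: hM; rewrite leq_maxl.
have [um _ dm] := newton_sqrt_inv m.
have -> : l ^+ 2 - u = (w m ^+ 2 - u) - (w m + w m - (w m - l)) * (w m - l) by ring.
apply: pdvdB; first by apply: (pdvdW (k := m.+1)) => //; rewrite /m; lia.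
apply: pdvd_vintM => //; apply: vintB; first by apply: vintD; exact: vunit_vint.
by apply/pdvd0; apply: (pdvdW (k := j)).
Qed.

End SquareRoot.

Definition res_sq (c : F) := exists z, vint v z /\ vmax v (c - z ^+ 2).

Lemma res_sq_sqr w : vint v w -> res_sq (w ^+ 2).
Proof. by move=> iw; exists w; split => //; rewrite subrr; left. Qed.

Lemma res_sqM x y : vint v x -> res_sq x -> res_sq y -> res_sq (x * y).
Proof.
move=> ix [z1 [i1 m1]] [z2 [i2 m2]]; exists (z1 * z2); split; first exact: vintM.
have -> : x * y - (z1 * z2) ^+ 2 = x * (y - z2 ^+ 2) + z2 ^+ 2 * (x - z1 ^+ 2) by ring.
by apply: vmaxD; apply: vmaxM => //; apply: vintX.
Qed.

Lemma res_sq_cancel a z x y : vint v a -> vunit v x -> vint v y ->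
  vmax v (z - x ^+ 2) -> vmax v (a * z - y ^+ 2) -> res_sq a.
Proof.
move=> ia ux iy hz haz; have nx : x != 0 by case: ux.
exists (y / x); split; first by apply: vintM => //; exact: vunitV_vint.
have -> : a - (y / x) ^+ 2 = (x ^+ 2)^-1 * ((a * z - y ^+ 2) - a * (z - x ^+ 2)) by field.
by apply: vmaxM; [apply: vunitV_vint; exact: vunit_sqr | apply: vmaxB => //; apply: vmaxM].
Qed.

Lemma res_sq_sqrt c : vunit v c -> res_sq c -> exists w, vunit v w /\ w ^+ 2 = c.
Proof.
move=> uc [z [iz mz]].
have uz : vunit v (z ^+ 2).
  by rewrite -(subrK c (z ^+ 2)) addrC; apply: vunitDmax => //; rewrite -opprB; apply: vmaxN.
have nz : z != 0 by case: (vunit_of_sqr uz).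
have [w hw] : exists w, w ^+ 2 = c / z ^+ 2.
  apply: sqrt_cong1; have -> : c / z ^+ 2 - 1 = (z ^+ 2)^-1 * (c - z ^+ 2) by field.
  by apply: vmaxM => //; apply: vunitV_vint.
have e : c = (z * w) ^+ 2 by rewrite exprMn hw mulrC mulfVK ?expf_neq0.
by exists (z * w); split; rewrite -?e //; apply: vunit_of_sqr; rewrite -e.
Qed.

Section ResidueClasses.
Variable s : seq F.
Hypothesis s_vint : forall y, y \in s -> vint v y.
Hypothesis s_cover : forall x, vint v x -> exists2 y, y \in s & vmax v (x - y).

Definition rclass (x : F) : option 'I_(size s) :=
  [pick i : 'I_(size s) | `[< vmax v (x - nth 0 s i) >] ].
Definition rrep (c : option 'I_(size s)) : F := if c is Some i then nth 0 s i else 0.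

Lemma rclassP x : vint v x -> vmax v (rrep (rclass x) - x) /\ vint v (rrep (rclass x)).
Proof.
move=> ix; rewrite /rclass; case: pickP => [i /asboolP hi | none].
  by split; [rewrite -opprB; apply: vmaxN | apply: s_vint; exact: mem_nth].
have [y ys hy] := s_cover ix; have iy : (index y s < size s)%N by rewrite index_mem.
by move: (none (Ordinal iy)) => /asboolP; rewrite /= nth_index.
Qed.

Lemma rclass_eq x y : vmax v (x - y) -> rclass x = rclass y.
Proof.
move=> h; apply: eq_pick => i; apply/asboolP/asboolP => hi.
  by rewrite -(subrKA x); apply: vmaxD => //; rewrite -opprB; apply: vmaxN.
by rewrite -(subrKA y); apply: vmaxD.
Qed.

Lemma rclass_inj x y : vint v x -> vint v y -> rclass x = rclass y -> vmax v (x - y).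
Proof.
move=> ix iy e; have [hx _] := rclassP ix; have [hy _] := rclassP iy.
rewrite e in hx; have -> : x - y = (rrep (rclass y) - y) - (rrep (rclass y) - x) by ring.
exact: vmaxB.
Qed.

Lemma rclass_rrep x : vint v x -> rclass (rrep (rclass x)) = rclass x.
Proof. by move=> ix; apply: rclass_eq; case: (rclassP ix). Qed.

Definition unit_classes := [set c | `[< exists x, vunit v x /\ c = rclass x >] ].
Definition sqr_classes := [set c | `[< exists x, vunit v x /\ c = rclass (x ^+ 2) >] ].

Lemma unit_classesP c : c \in unit_classes ->
  [/\ vunit v (rrep c), vint v (rrep c) & c = rclass (rrep c)].
Proof.
rewrite inE => /asboolP[x [ux ->]]; have [hx ix] := rclassP (vunit_vint ux).
split => //; last by rewrite rclass_rrep //; exact: vunit_vint.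
by rewrite -(subrK x (rrep _)) addrC; apply: vunitDmax.
Qed.

Lemma sqr_classes_sub : sqr_classes \subset unit_classes.
Proof.
apply/subsetP => c; rewrite !inE => /asboolP[x [ux ->]]; apply/asboolP.
by exists (x ^+ 2); split => //; exact: vunit_sqr.
Qed.

Lemma card_unit_classes : (#|unit_classes| <= #|sqr_classes| + #|sqr_classes|)%N.
Proof.
pose sq c := rclass (rrep c ^+ 2).
pose neg c := rclass (- rrep c).
(* [root j] is one square root of the class j; every unit class is a root or its
   negative, since x^2 = y^2 mod p forces x = y or x = -y mod p. *)
pose root j := if [pick c in unit_classes | sq c == j] is Some c then c else j.
have rootP c : c \in unit_classes -> root (sq c) \in unit_classes /\ sq (root (sq c)) = sq c.
  rewrite /root => cU; case: pickP => [c' /andP[c'U /eqP //] | none].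
  by move: (none c); rewrite cU eqxx.
suff cover : unit_classes \subset (root @: sqr_classes) :|: ((neg \o root) @: sqr_classes).
  apply: leq_trans (subset_leq_card cover) _; apply: leq_trans (leq_card_setU _ _) _.
  by apply: leq_add; apply: leq_imset_card.
apply/subsetP => c cU; have [uc ic ec] := unit_classesP cU.
have jQ : sq c \in sqr_classes by rewrite inE; apply/asboolP; exists (rrep c).
have [r'U er] := rootP c cU; have [_ ir er'] := unit_classesP r'U.
have : vmax v ((rrep (root (sq c)) - rrep c) * (rrep (root (sq c)) + rrep c)).
  rewrite -subr_sqr; apply: rclass_inj; [exact: vintX | exact: vintX | exact: er].
rewrite in_setU; case/vmax_primeM; [exact: vintB | exact: vintD | move=> h | move=> h].
  apply/orP; left; apply/imsetP; exists (sq c) => //.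
  by rewrite {1}ec er'; apply: rclass_eq; rewrite -opprB; apply: vmaxN.
apply/orP; right; apply/imsetP; exists (sq c) => //=.
by rewrite {1}ec /neg; apply: rclass_eq; rewrite opprK addrC.
Qed.

Lemma nonsq_mul_classes a : vunit v a -> ~ res_sq a ->
  [set rclass (a * rrep c) | c in sqr_classes] = unit_classes :\: sqr_classes.
Proof.
move=> ua na; have ia := vunit_vint ua.
apply: imset_eq_setD; [exact: sqr_classes_sub | exact: card_unit_classes | |].
  move=> c1 c2 /(subsetP sqr_classes_sub) c1U /(subsetP sqr_classes_sub) c2U e.
  have [_ i1 ->] := unit_classesP c1U; have [_ i2 ->] := unit_classesP c2U.
  have h := rclass_inj (vintM ia i1) (vintM ia i2) e.
  have na0 : a != 0 by case: ua.
  by apply: rclass_eq; rewrite -(mulKf na0 (_ - _)) mulrBr; apply: vmaxM => //; apply: vunitV_vint.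
move=> c cQ; have [uc ic _] := unit_classesP (subsetP sqr_classes_sub c cQ).
rewrite !inE; apply/andP; split; last first.
  by apply/asboolP; exists (a * rrep c); split => //; exact: vunitM.
apply/negP => /asboolP[y [uy ey]]; move: cQ; rewrite inE => /asboolP[x [ux ex]].
apply: na; apply: (res_sq_cancel ia ux (vunit_vint uy) (z := rrep c)).
  by rewrite ex; case: (rclassP (vintX 2 (vunit_vint ux))).
by apply: rclass_inj => //; [exact: vintM | apply: vintX; exact: vunit_vint].
Qed.

Lemma res_sq_nonsqM_of_classes a b : vunit v a -> vunit v b -> ~ res_sq a -> ~ res_sq b ->
  res_sq (a * b).
Proof.
move=> ua ub na nb; have ia := vunit_vint ua; have ib := vunit_vint ub.
have : rclass b \in unit_classes :\: sqr_classes.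
  rewrite !inE; apply/andP; split; last by apply/asboolP; exists b.
  apply/negP => /asboolP[y [uy ey]]; apply: nb; exists y; split; first exact: vunit_vint.
  by apply: rclass_inj ey => //; apply: vintX; exact: vunit_vint.
rewrite -(nonsq_mul_classes ua na) => /imsetP[c cQ ebc].
have [_ ic _] := unit_classesP (subsetP sqr_classes_sub c cQ).
move: cQ; rewrite inE => /asboolP[x [ux ex]]; have ix := vunit_vint ux.
have h1 : vmax v (b - a * rrep c) by apply: rclass_inj => //; exact: vintM.
have h2 : vmax v (rrep c - x ^+ 2) by rewrite ex; case: (rclassP (vintX 2 ix)).
exists (a * x); split; first exact: vintM.
have -> : a * b - (a * x) ^+ 2 = a * (b - a * rrep c) + a * a * (rrep c - x ^+ 2) by ring.
by apply: vmaxD; apply: vmaxM => //; apply: vintM.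
Qed.

End ResidueClasses.

Lemma res_sq_nonsqM a b : vunit v a -> vunit v b -> ~ res_sq a -> ~ res_sq b ->
  res_sq (a * b).
Proof.
have [s [s_vint s_cover]] := v_residue_finite HF.
exact: (res_sq_nonsqM_of_classes s_vint s_cover).
Qed.

Section Order.
Variables (eps a b K L P : F).
Hypothesis piKL : pi = K * L.
Hypotheses (vint_a : vint v a) (vint_b : vint v b) (vint_eps : vint v eps).
Hypotheses (vint_K : vint v K) (vint_L : vint v L) (vint_P : vint v P).
Hypotheses (vunit_disc : vunit v (1 - 4%:R * eps)) (vunit_Nw : vunit v (1 + b + b ^+ 2 * eps)).

Local Notation mul := (qmul eps pi).
Local Notation nr := (Nr eps pi).
Local Notation qconjg := (qconjg eps pi).
Local Notation qcomm := (qcomm eps pi).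
Local Notation d := (2%:R^-1 ^+ 2 - eps).
Local Notation Nw := (1 + b + b ^+ 2 * eps).
Local Notation Tw := (1 + 2%:R * b * eps).
Local Notation U := (- Nw - pi * a ^+ 2 * d).
Local Notation pr := (K * K * L * P).
Local Notation ps := (K * L * P).

(* [delta] is x_αβ − α/2 with α = π a, [theta] is x1 − 1/2, Nr delta = π U and
   Nw = Nm(1 + b x1). [pr] and [ps] stand for π^r and π^s: the final theorem takes
   (K, L) = (1, π) for n odd, (K, L) = (π, 1) for n even, and P = π^(s-1). *)

Definition delta := Quat (- (pi * a) / 2%:R) (pi * a) 1 b.
Definition theta : quat F := Quat (- 2%:R^-1) 1 0 0.
Definition omega := qadd (qscale U theta) (qscale (a * d) delta).
(* O has O_F-basis 1, delta, e2 = π^r x1, e3 = π^s x3. *)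
Definition e2 := Quat 0 pr 0 0.
Definition e3 := Quat 0 0 0 ps.
Definition obasis c0 c1 c2 c3 :=
  qadd (qadd (qs c0) (qscale c1 delta)) (qadd (qscale c2 e2) (qscale c3 e3)).
Definition inOrd y := exists c0 c1 c2 c3,
  [/\ vint v c0, vint v c1, vint v c2 & vint v c3] /\ y = obasis c0 c1 c2 c3.
Definition melt A B := qadd (qs A) (qscale B delta).
Definition normM c := exists A B, (A != 0 \/ B != 0) /\ c = A ^+ 2 + B ^+ 2 * (pi * U).

Lemma vunit_d : vunit v d.
Proof.
have -> : d = (1 - 4%:R * eps) * (2%:R^-1 * 2%:R^-1) by field_nz.
by apply: vunitM => //; apply: vunitM; exact: vunitV (v_nondyadic HF).
Qed.

Lemma vunit_U : vunit v U.
Proof.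
apply: vunitDmax; first exact: vunitN.
rewrite -mulrA; apply/vmaxN/vmax_piM/vintM; first exact: vintX.
exact: vunit_vint vunit_d.
Qed.

Let d_neq0 : d != 0 := vunit_d.1.
Let U_neq0 : U != 0 := vunit_U.1.
Let Nw_neq0 : Nw != 0 := vunit_Nw.1.
Let piU_neq0 : pi * U != 0 := mulf_neq0 pi_neq0 U_neq0.

Lemma Trd_delta : Trd delta = 0.
Proof. by rewrite /Trd /delta /=; field_nz. Qed.

Lemma Nr_delta : nr delta = pi * U.
Proof. by rewrite /Nr qmulE /delta /=; field_nz. Qed.

Lemma Nr_omega : nr omega = d * U * Nw.
Proof. by rewrite /Nr qmulE /omega /delta /theta /=; field_nz. Qed.

Lemma Trd_omega : Trd omega = 0.
Proof. by rewrite /Trd /omega /theta /delta /=; field_nz. Qed.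

Lemma omega_anticomm : mul omega delta = qscale (-1) (mul delta omega).
Proof. by apply: quat_eq; rewrite !qmulE /omega /delta /theta /=; field_nz. Qed.

Lemma Nr_melt A B : nr (melt A B) = A ^+ 2 + B ^+ 2 * (pi * U).
Proof. by rewrite /Nr qmulE /melt /delta /=; field_nz. Qed.

Lemma qconj_melt A B : qconj (melt A B) = melt A (- B).
Proof. by apply: quat_eq; rewrite /melt /delta /=; field_nz. Qed.

Lemma obasisD c0 c1 c2 c3 c0' c1' c2' c3' :
  qadd (obasis c0 c1 c2 c3) (obasis c0' c1' c2' c3') =
  obasis (c0 + c0') (c1 + c1') (c2 + c2') (c3 + c3').
Proof. rewrite /obasis; quat_ring. Qed.

Lemma obasisZ c c0 c1 c2 c3 :
  qscale c (obasis c0 c1 c2 c3) = obasis (c * c0) (c * c1) (c * c2) (c * c3).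
Proof. rewrite /obasis; quat_ring. Qed.

Lemma inOrd_obasis c0 c1 c2 c3 : vint v c0 -> vint v c1 -> vint v c2 -> vint v c3 ->
  inOrd (obasis c0 c1 c2 c3).
Proof. by move=> *; exists c0, c1, c2, c3. Qed.

Lemma inOrdD x y : inOrd x -> inOrd y -> inOrd (qadd x y).
Proof.
move=> [c0 [c1 [c2 [c3 [[i0 i1 i2 i3] ->]]]]] [c0' [c1' [c2' [c3' [[j0 j1 j2 j3] ->]]]]].
by rewrite obasisD; apply: inOrd_obasis; apply: vintD.
Qed.

Lemma inOrdZ c y : vint v c -> inOrd y -> inOrd (qscale c y).
Proof.
move=> ic [c0 [c1 [c2 [c3 [[i0 i1 i2 i3] ->]]]]].
by rewrite obasisZ; apply: inOrd_obasis; apply: vintM.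
Qed.

Lemma inOrd_qs c : vint v c -> inOrd (qs c).
Proof.
move=> ic; have -> : qs c = obasis c 0 0 0 by rewrite /obasis; quat_ring.
by apply: inOrd_obasis => //; exact: vint0.
Qed.

Lemma inOrd_delta : inOrd delta.
Proof.
have -> : delta = obasis 0 1 0 0 by rewrite /obasis; quat_ring.
by apply: inOrd_obasis; [exact: vint0 | exact: vint1 | exact: vint0 | exact: vint0].
Qed.

Lemma inOrd_linear (f : quat F -> quat F) :
    (forall x y, f (qadd x y) = qadd (f x) (f y)) ->
    (forall c x, f (qscale c x) = qscale c (f x)) ->
    inOrd (f (qone F)) -> inOrd (f delta) -> inOrd (f e2) -> inOrd (f e3) ->
  forall y, inOrd y -> inOrd (f y).
Proof.
move=> fD fZ h1 hd h2 h3 y [c0 [c1 [c2 [c3 [[i0 i1 i2 i3] ->]]]]].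
rewrite /obasis (_ : qs c0 = qscale c0 (qone F)); last by quat_ring.
by rewrite !fD !fZ; apply: inOrdD; apply: inOrdD; apply: inOrdZ.
Qed.

Lemma qcomm_delta_e2 : qcomm delta e2 =
  obasis (pi * pr * a * Tw / 2%:R) (pr * Tw) (- (pi * a * Tw)) (- (2%:R * K * Nw)).
Proof. by apply: quat_eq; rewrite /qcomm !qmulE /obasis /delta /e2 /e3 /= piKL; field_nz. Qed.

Lemma qcomm_delta_e3 : qcomm delta e3 =
  obasis (pi * ps * (1 - pi * a ^+ 2 * eps)) (- (2%:R * a * eps * pi * ps))
         (- (2%:R * L * (1 - pi * a ^+ 2 * eps))) (pi * a * Tw).
Proof. by apply: quat_eq; rewrite /qcomm !qmulE /obasis /delta /e2 /e3 /= piKL; field_nz. Qed.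

Lemma delta_e2_sandwich : mul (mul delta e2) (qconj delta) =
  qscale pi (obasis (U * pr) (- (2%:R * a * d * pr)) (- U) 0).
Proof. by apply: quat_eq; rewrite !qmulE /obasis /delta /e2 /e3 /= piKL; field_nz. Qed.

Lemma delta_e3_sandwich : mul (mul delta e3) (qconj delta) =
  qscale pi (obasis 0 (- (ps * Tw)) 0 (- U)).
Proof. by apply: quat_eq; rewrite !qmulE /obasis /delta /e2 /e3 /= piKL; field_nz. Qed.

Lemma omega_e2_sandwich : mul (mul omega e2) (qconj omega) =
  obasis 0 (2%:R * a * d ^+ 2 * Nw * pr) (d * U * Nw) 0.
Proof.
by apply: quat_eq; rewrite !qmulE /obasis /omega /theta /delta /e2 /e3 /= piKL; field_nz.
Qed.

Lemma omega_e3_sandwich : mul (mul omega e3) (qconj omega) =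
  obasis (d * U * pi * ps * a * Tw / 2%:R) (- (d ^+ 2 * pi * ps * a ^+ 2 * Tw))
         (- (d * U * a * L * Tw)) (- (d * U * Nw)).
Proof.
by apply: quat_eq; rewrite !qmulE /obasis /omega /theta /delta /e2 /e3 /= piKL; field_nz.
Qed.

Let vint_Uinv : vint v U^-1 := vunitV_vint vunit_U.

Ltac vint_tac := repeat first [ assumption | exact: vint0 | exact: vint1 | exact: vint_nat
  | exact: vint_inv2 | exact: vint_pi | exact: vint_Uinv
  | apply: vintD | apply: vintN | apply: vintM | apply: vintX ].

Lemma inOrd_qcomm_delta y : inOrd y -> inOrd (qcomm delta y).
Proof.
have inOrd0 : inOrd (qs 0) by apply: inOrd_qs; exact: vint0.
apply: inOrd_linear => [x z|c x||||]; rewrite ?qcomm_delta_e2 ?qcomm_delta_e3.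
- by rewrite /qcomm; quat_ring.
- by rewrite /qcomm; quat_ring.
- by rewrite (_ : qcomm _ _ = qs 0) //; rewrite /qcomm; quat_ring.
- by rewrite (_ : qcomm _ _ = qs 0) //; rewrite /qcomm; quat_ring.
- by apply: inOrd_obasis; vint_tac.
- by apply: inOrd_obasis; vint_tac.
Qed.

Lemma inOrd_qconjg_delta y : inOrd y -> inOrd (qconjg delta y).
Proof.
have nd : nr delta != 0 by rewrite Nr_delta.
have piUV : (pi * U)^-1 * pi = U^-1 by move: (U) U_neq0 pi_neq0 => u nu np; field_nz.
apply: inOrd_linear; [exact: qconjgD | exact: qconjgZ | | | |].
- by rewrite qconjg_qs //; apply: inOrd_qs; exact: vint1.
- by rewrite qconjg_comm //; exact: inOrd_delta.
- rewrite /qconjg delta_e2_sandwich Nr_delta qscaleA piUV.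
  by apply: inOrdZ => //; apply: inOrd_obasis; vint_tac.
- rewrite /qconjg delta_e3_sandwich Nr_delta qscaleA piUV.
  by apply: inOrdZ => //; apply: inOrd_obasis; vint_tac.
Qed.

Lemma vunit_Nr_omega : vunit v (nr omega).
Proof.
by rewrite Nr_omega; apply: vunitM => //; apply: vunitM; [exact: vunit_d | exact: vunit_U].
Qed.

Lemma inOrd_qconjg_omega y : inOrd y -> inOrd (qconjg omega y).
Proof.
have no : nr omega != 0 by case: vunit_Nr_omega.
have ioV : vint v (nr omega)^-1 by exact: vunitV_vint vunit_Nr_omega.
apply: inOrd_linear; [exact: qconjgD | exact: qconjgZ | | | |].
- by rewrite qconjg_qs //; apply: inOrd_qs; exact: vint1.
- rewrite (qconjg_anticomm no omega_anticomm).
  by apply: inOrdZ; [apply: vintN; exact: vint1 | exact: inOrd_delta].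
- rewrite /qconjg omega_e2_sandwich.
  by apply: inOrdZ => //; apply: inOrd_obasis; vint_tac.
- rewrite /qconjg omega_e3_sandwich.
  by apply: inOrdZ => //; apply: inOrd_obasis; vint_tac.
Qed.

Lemma qconjg_melt_scaled A B lam y : lam != 0 ->
    A ^+ 2 + B ^+ 2 * (pi * U) != 0 ->
  qconjg (melt A B) y = qscale ((A ^+ 2 + B ^+ 2 * (pi * U)) / lam)^-1
    (qadd (qadd (qscale (A ^+ 2 / lam) y) (qscale (A * B / lam) (qcomm delta y)))
          (qscale (B ^+ 2 * (pi * U) / lam) (qconjg delta y))).
Proof.
move=> nl nN; rewrite {1}/qconjg Nr_melt sandwich_Trd0 ?Trd_delta //.
rewrite /qconjg Nr_delta (qconj_Trd0 Trd_delta) qmulZr.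
move: (mul (mul delta y) delta) (qcomm delta y) nN => X C; move: (pi * U) piU_neq0 => u nu nN.
by apply: quat_eq; cbn [q0 q1 q2 q3 qadd qscale]; field_nz.
Qed.

Lemma inOrd_qconjg_melt_scaled A B lam y : lam != 0 ->
    vint v (A ^+ 2 / lam) -> vint v (A * B / lam) -> vint v (B ^+ 2 * (pi * U) / lam) ->
    vunit v ((A ^+ 2 + B ^+ 2 * (pi * U)) / lam) ->
  inOrd y -> inOrd (qconjg (melt A B) y).
Proof.
move=> nl i0 i1 i2 hu hy; have nN := hu.1.
rewrite (qconjg_melt_scaled _ nl); last by apply: contraNneq nN => ->; rewrite mul0r.
apply: inOrdZ; first exact: vunitV_vint hu.
apply: inOrdD; [apply: inOrdD|]; apply: inOrdZ => //.
  exact: inOrd_qcomm_delta.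
exact: inOrd_qconjg_delta.
Qed.

Lemma normM_expr_neq0 A B : A != 0 \/ B != 0 -> A ^+ 2 + B ^+ 2 * (pi * U) != 0.
Proof.
have [->|nB] := eqVneq B 0; first by case=> // nA; rewrite expr0n mul0r addr0 expf_neq0.
move=> _; apply/eqP => E.
have E' : (A / B) ^+ 2 = - (pi * U) + (B ^+ 2)^-1 * (A ^+ 2 + B ^+ 2 * (pi * U)).
  by move: (pi * U) => u; field_nz.
rewrite E mulr0 addr0 in E'.
have [A0|nA] := eqVneq A 0.
  by move: E'; rewrite A0 mul0r expr0n /= => /eqP; rewrite eq_sym oppr_eq0 (negbTE piU_neq0).
by move/eqP: E'; rewrite -mulrN (negbTE (sqr_neq_pi_unit (A / B) (vunitN vunit_U))).
Qed.

Lemma inOrd_qconjg_melt A B y : A != 0 \/ B != 0 -> inOrd y -> inOrd (qconjg (melt A B) y).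
Proof.
move=> nAB hy; have nN := normM_expr_neq0 nAB.
have [B0|nB] := eqVneq B 0.
  have nA : A != 0 by case: nAB => //; rewrite B0 eqxx.
  by rewrite (_ : melt A B = qs A) ?qconjg_by_qs // /melt B0; quat_ring.
have [A0|nA] := eqVneq A 0.
  rewrite (_ : melt A B = qscale B delta); last by rewrite /melt A0; quat_ring.
  by rewrite qconjg_byZ //; exact: inOrd_qconjg_delta.
have np := pi_neq0; have nU := U_neq0; have n2 := two_neq0.
(* rescale by A^2 if B/A is integral, by pi B^2 if A/B is in p *)
have [tB | sA] := vint_divVmax nA nB.
  apply: (inOrd_qconjg_melt_scaled (lam := A ^+ 2)) hy; first exact: expf_neq0.
  - by rewrite divff ?expf_neq0 //; exact: vint1.
  - by rewrite (_ : _ / _ = B / A) //; field_nz.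
  - by rewrite (_ : _ / _ = (B / A) ^+ 2 * (pi * U)); [vint_tac | field_nz].
  rewrite (_ : _ / _ = 1 + pi * ((B / A) ^+ 2 * U)); last by field_nz.
  by apply: vunitDmax; [exact: vunit1 | apply: vmax_piM; vint_tac].
have sA' := proj1 (vmaxE _) sA.
apply: (inOrd_qconjg_melt_scaled (lam := pi * B ^+ 2)) hy; first by rewrite mulf_neq0 ?expf_neq0.
- by rewrite (_ : _ / _ = A / B * (A / B / pi)); [apply: vintM => //; exact: vmax_vint | field_nz].
- by rewrite (_ : _ / _ = A / B / pi) //; field_nz.
- by rewrite (_ : _ / _ = U); [exact: vunit_vint vunit_U | field_nz].
rewrite (_ : _ / _ = U + A / B * (A / B / pi)); last by field_nz.
by apply: vunitDmax; [exact: vunit_U | rewrite mulrC; apply: vmaxM].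
Qed.

Lemma normM_neq0 c : normM c -> c != 0.
Proof. by case=> A [B [nAB ->]]; apply: normM_expr_neq0. Qed.

Lemma normM_sqr w : w != 0 -> normM (w ^+ 2).
Proof. by move=> nw; exists w, 0; split; [left | rewrite expr0n mul0r addr0]. Qed.

Lemma normM_piU : normM (pi * U).
Proof. by exists 0, 1; split; [right; exact: oner_neq0 | rewrite expr0n expr1n mul1r add0r]. Qed.

Lemma normMM c c' : normM c -> normM c' -> normM (c * c').
Proof.
move=> hc hc'; have nc := normM_neq0 hc; have nc' := normM_neq0 hc'.
case: hc => A [B [_ ec]]; case: hc' => A' [B' [_ ec']].
pose A'' := A * A' - B * B' * (pi * U); pose B'' := A * B' + A' * B.
have e : c * c' = A'' ^+ 2 + B'' ^+ 2 * (pi * U) by rewrite ec ec' /A'' /B''; ring.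
exists A'', B''; split => //.
have [h1|] := eqVneq A'' 0; last by left.
have [h2|] := eqVneq B'' 0; last by right.
by move: (mulf_neq0 nc nc'); rewrite e h1 h2 expr0n mul0r addr0 eqxx.
Qed.

Lemma normMV c : normM c -> normM c^-1.
Proof.
move=> hc; have nc := normM_neq0 hc; case: hc => A [B [nAB ec]].
exists (A / c), (- B / c); split.
  by case: nAB => h; [left | right]; rewrite mulf_neq0 ?invr_eq0 ?oppr_eq0.
have nN : A ^+ 2 + B ^+ 2 * (pi * U) != 0 by rewrite -ec.
by rewrite ec; move: (pi * U) nN => u nN; field_nz.
Qed.

Lemma normM_divr c c' : normM (c * c') -> normM c' -> normM c.
Proof.
move=> hcc' hc'; have nc' := normM_neq0 hc'.
by rewrite -(mulfK nc' c); apply: normMM => //; apply: normMV.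
Qed.

Lemma normM_cong1 x : vmax v (x - 1) -> normM x.
Proof.
move=> h; have [w hw] := sqrt_cong1 h.
have nx : x != 0 by case: (vunitDmax vunit1 h); rewrite addrC subrK.
by rewrite -hw; apply: normM_sqr; apply: contraNneq nx => w0; rewrite -hw w0 expr0n.
Qed.

Definition NrN c := exists g, (exists h, [/\ mul g h = qone F, mul h g = qone F &
  forall y, inOrd y <-> inOrd (mul (mul g y) h)]) /\ c = nr g.

Lemma NrN_normM c : normM c -> NrN c.
Proof.
case=> A [B [nAB ->]]; exists (melt A B); split; last by rewrite Nr_melt.
apply: normalizer_of_qconjg; first by rewrite Nr_melt normM_expr_neq0.
  by move=> y; apply: inOrd_qconjg_melt.
rewrite qconj_melt => y; apply: inOrd_qconjg_melt.
by case: nAB => h; [left | right; rewrite oppr_eq0].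
Qed.

Lemma NrN_Nr_omega : NrN (nr omega).
Proof.
exists omega; split => //; have no := vunit_Nr_omega.1.
apply: normalizer_of_qconjg => // y hy; last rewrite (qconj_Trd0 Trd_omega) qconjg_byZ.
all: by [exact: inOrd_qconjg_omega | rewrite oppr_eq0 oner_eq0].
Qed.

Lemma commutant_delta m : mul m delta = mul delta m -> exists A B, m = melt A B.
Proof.
move=> comm; have n2 := two_neq0.
have diff (f : quat F -> F) : f (mul m delta) - f (mul delta m) = 0 by rewrite comm subrr.
have h3 : q3 m = b * q2 m.
  have : - pi * (q3 m - b * q2 m) = 0.
    by apply: (etrans _ (diff (@q0 F))); rewrite !qmulE /delta /=; field_nz.
  by move/eqP; rewrite mulf_eq0 oppr_eq0 (negbTE pi_neq0) subr_eq0 => /eqP.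
have hA : (1 + 2%:R * b * eps) * (pi * a * q2 m - q1 m) = 0.
  by apply: (etrans _ (diff (@q2 F))); rewrite !qmulE /delta /= h3; field_nz.
have hB : (2%:R + b) * (q1 m - pi * a * q2 m) = 0.
  by apply: (etrans _ (diff (@q3 F))); rewrite !qmulE /delta /= h3; field_nz.
(* (1 + 2 b eps) - 2 eps (2 + b) = 1 - 4 eps is a unit *)
have h1 : q1 m = pi * a * q2 m.
  apply/eqP; rewrite -subr_eq0; apply/eqP.
  have -> : q1 m - pi * a * q2 m = (1 - 4%:R * eps)^-1 *
      (- ((1 + 2%:R * b * eps) * (pi * a * q2 m - q1 m))
       - 2%:R * eps * ((2%:R + b) * (q1 m - pi * a * q2 m))).
    by move: vunit_disc.1 => nd; field_nz.
  by rewrite hA hB oppr0 mulr0 subrr mulr0.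
exists (q0 m + q2 m * (pi * a) / 2%:R), (q2 m).
by apply: quat_eq; rewrite /melt /delta /= ?h1 ?h3; field_nz.
Qed.

Lemma normM_Nr_commutant m : nr m != 0 -> mul m delta = mul delta m -> normM (nr m).
Proof.
move=> nm /commutant_delta[A [B em]]; rewrite em Nr_melt in nm *; exists A, B; split => //.
have [A0|] := eqVneq A 0; last by left.
have [B0|] := eqVneq B 0; last by right.
by move: nm; rewrite A0 B0 expr0n mul0r addr0 eqxx.
Qed.

Lemma normM_intertwiner g k z : nr g != 0 -> nr k != 0 -> Trd z = 0 ->
  mul z g = mul g delta -> mul k delta = mul z k -> normM (nr k * nr g).
Proof.
move=> ng nk tz zg kz.
have kz' : mul (qconj k) z = mul delta (qconj k).
  have := congr1 (fun x => qscale (-1) (qconj x)) kz.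
  rewrite /= !qconjM (qconj_Trd0 Trd_delta) (qconj_Trd0 tz) qmulZl qmulZr !qscaleA.
  by rewrite mulrNN mulr1 !qscale1 => ->.
rewrite -(Nr_conj eps) -NrM; apply: normM_Nr_commutant; first by rewrite NrM Nr_conj mulf_neq0.
by rewrite qmulA -zg -qmulA kz' qmulA.
Qed.

(* The trace-zero elements of O; [gcross] and [grest] collect the terms of the
   norms below that are divisible by pi^2. *)
Definition tr0 c1 c2 c3 := obasis (- (c2 * pr) / 2%:R) c1 c2 c3.
Definition gcross c2 c3 := - P * (Tw * c3 + 2%:R * a * d * K * c2).
Definition grest c1 c2 c3 :=
  c1 * gcross c2 c3 - P ^+ 2 * (d * K ^+ 2 * c2 ^+ 2 + eps * pi * c3 ^+ 2).

Lemma inOrd_Trd0 z : inOrd z -> Trd z = 0 ->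
  exists c1 c2 c3, [/\ vint v c1, vint v c2, vint v c3 & z = tr0 c1 c2 c3].
Proof.
case=> c0 [c1 [c2 [c3 [[i0 i1 i2 i3] ez]]]] tz; exists c1, c2, c3; split => //.
have n2 := two_neq0.
have trE : Trd z = 2%:R * c0 + c2 * pr by rewrite ez /Trd /obasis /delta /e2 /e3 /=; field_nz.
have c0E : c0 = ((2%:R * c0 + c2 * pr) - c2 * pr) / 2%:R by field_nz.
rewrite -trE tz sub0r in c0E.
by rewrite ez c0E.
Qed.

Lemma Nr_tr0 c1 c2 c3 : nr (tr0 c1 c2 c3) = c1 ^+ 2 * (pi * U) + pi ^+ 2 * grest c1 c2 c3.
Proof.
by rewrite /Nr qmulE /tr0 /grest /gcross /obasis /delta /e2 /e3 /= piKL; field_nz.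
Qed.

Lemma Nr_delta_add_tr0 c1 c2 c3 : nr (qadd delta (tr0 c1 c2 c3)) =
  nr (tr0 c1 c2 c3) + pi * U + 2%:R * c1 * (pi * U) + pi ^+ 2 * gcross c2 c3.
Proof.
by rewrite /Nr !qmulE /tr0 /gcross /obasis /delta /e2 /e3 /= piKL; field_nz.
Qed.

Lemma Nr_delta_sub_tr0 c1 c2 c3 : nr (qadd delta (qscale (-1) (tr0 c1 c2 c3))) =
  nr (tr0 c1 c2 c3) + pi * U - 2%:R * c1 * (pi * U) - pi ^+ 2 * gcross c2 c3.
Proof.
by rewrite /Nr !qmulE /tr0 /gcross /obasis /delta /e2 /e3 /= piKL; field_nz.
Qed.

Lemma tr0_coef_sqr_cong1 c1 c2 c3 : vint v c1 -> vint v c2 -> vint v c3 ->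
  nr (tr0 c1 c2 c3) = pi * U -> vmax v ((1 - c1) * (1 + c1)).
Proof.
move=> i1 i2 i3; rewrite Nr_tr0 => E.
have -> : (1 - c1) * (1 + c1) = pi * (grest c1 c2 c3 / U).
  move: (grest c1 c2 c3) E U_neq0 pi_neq0; move: (U) => u G E nu np.
  have -> : (1 - c1) * (1 + c1) = (pi * u - c1 ^+ 2 * (pi * u)) / (pi * u) by field_nz.
  by rewrite -{1}E; field_nz.
by apply: vmax_piM; rewrite /grest /gcross; vint_tac.
Qed.

Lemma normM_piU_cong4 x : vmax v (x - 2%:R ^+ 2) -> normM (pi * U * x).
Proof.
move=> h; have n2 := two_neq0.
have -> : pi * U * x = pi * U * 2%:R ^+ 2 * (x * 2%:R^-1 ^+ 2) by field_nz.
apply: normMM; first by apply: normMM; [exact: normM_piU | exact: normM_sqr].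
apply: normM_cong1; have -> : x * 2%:R^-1 ^+ 2 - 1 = 2%:R^-1 ^+ 2 * (x - 2%:R ^+ 2) by field_nz.
by apply: vmaxM => //; vint_tac.
Qed.

Lemma normM_Nr_delta_add_tr0 c1 c2 c3 : vint v c1 -> vint v c2 -> vint v c3 ->
  nr (tr0 c1 c2 c3) = pi * U -> vmax v (1 - c1) -> normM (nr (qadd delta (tr0 c1 c2 c3))).
Proof.
move=> i1 i2 i3 E m1; rewrite Nr_delta_add_tr0 E.
have iG : vint v (gcross c2 c3 / U) by rewrite /gcross; vint_tac.
move: (gcross c2 c3) iG U_neq0 pi_neq0 => G iG nU np.
have -> : pi * U + pi * U + 2%:R * c1 * (pi * U) + pi ^+ 2 * G =
    pi * U * (2%:R + 2%:R * c1 + pi * (G / U)).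
  by move: (U) nU => u nu; field_nz.
apply: normM_piU_cong4.
have -> : 2%:R + 2%:R * c1 + pi * (G / U) - 2%:R ^+ 2 = - (2%:R * (1 - c1)) + pi * (G / U) by ring.
by apply: vmaxD; [apply/vmaxN/vmaxM => //; exact: vint_nat | exact: vmax_piM].
Qed.

Lemma normM_Nr_delta_sub_tr0 c1 c2 c3 : vint v c1 -> vint v c2 -> vint v c3 ->
  nr (tr0 c1 c2 c3) = pi * U -> vmax v (1 + c1) ->
  normM (nr (qadd delta (qscale (-1) (tr0 c1 c2 c3)))).
Proof.
move=> i1 i2 i3 E m1; rewrite Nr_delta_sub_tr0 E.
have iG : vint v (gcross c2 c3 / U) by rewrite /gcross; vint_tac.
move: (gcross c2 c3) iG U_neq0 pi_neq0 => G iG nU np.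
have -> : pi * U + pi * U - 2%:R * c1 * (pi * U) - pi ^+ 2 * G =
    pi * U * (2%:R - 2%:R * c1 - pi * (G / U)).
  by move: (U) nU => u nu; field_nz.
apply: normM_piU_cong4.
have -> : 2%:R - 2%:R * c1 - pi * (G / U) - 2%:R ^+ 2 = - (2%:R * (1 + c1)) - pi * (G / U) by ring.
by apply: vmaxB; [apply/vmaxN/vmaxM => //; exact: vint_nat | exact: vmax_piM].
Qed.

Lemma intertwine_delta_add z : Trd z = 0 -> nr z = pi * U ->
  mul (qadd delta z) delta = mul z (qadd delta z).
Proof.
move=> tz nz; rewrite qmulDl qmulDr (qmul_Trd0 eps pi Trd_delta) (qmul_Trd0 eps pi tz) nz Nr_delta.
exact: qaddC.
Qed.

Lemma intertwine_delta_sub z : Trd z = 0 -> nr z = pi * U ->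
  mul (mul (qadd delta (qscale (-1) z)) omega) delta =
  mul z (mul (qadd delta (qscale (-1) z)) omega).
Proof.
move=> tz nz; rewrite qmulA omega_anticomm qmulZr -qmulA -qmulZl -!qmulA; congr (mul _ _).
rewrite !(qmulDl, qmulDr, qmulZl, qmulZr) (qmul_Trd0 eps pi Trd_delta) (qmul_Trd0 eps pi tz).
rewrite nz Nr_delta.
by apply: quat_eq; cbn [q0 q1 q2 q3 qadd qscale qs]; ring.
Qed.

Lemma normM_of_NrN c : normM (nr omega) -> NrN c -> normM c.
Proof.
move=> So [g [[h [gh hg hn]] ->]]; have ng := Nr_neq0_of_inv gh.
pose z := mul (mul g delta) h.
have tz : Trd z = 0 by rewrite /z TrdC -qmulA hg qmul1q Trd_delta.
have nz : nr z = pi * U by rewrite /z !NrM Nr_delta mulrAC -NrM gh Nr_qone mul1r.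
have zg : mul z g = mul g delta by rewrite /z qmulA hg qmulq1.
have [c1 [c2 [c3 [i1 i2 i3 ez]]]] := inOrd_Trd0 ((hn delta).1 inOrd_delta) tz.
have nz' : nr (tr0 c1 c2 c3) = pi * U by rewrite -ez.
have [m1|m1] := vmax_primeM (vintB vint1 i1) (vintD vint1 i1) (tr0_coef_sqr_cong1 i1 i2 i3 nz').
  have Sk := normM_Nr_delta_add_tr0 i1 i2 i3 nz' m1; rewrite -ez in Sk.
  apply: (normM_divr _ Sk); rewrite mulrC.
  exact: normM_intertwiner ng (normM_neq0 Sk) tz zg (intertwine_delta_add tz nz).
have Sk := normMM (normM_Nr_delta_sub_tr0 i1 i2 i3 nz' m1) So; rewrite -ez -NrM in Sk.
apply: (normM_divr _ Sk); rewrite mulrC.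
exact: normM_intertwiner ng (normM_neq0 Sk) tz zg (intertwine_delta_sub tz nz).
Qed.

Lemma normM_unit_res_sq c : normM c -> vunit v c -> res_sq c.
Proof.
case=> A [B [nAB ec]] uc; have nU := U_neq0; have np := pi_neq0.
have [B0|nB] := eqVneq B 0.
  move: uc; rewrite ec B0 expr0n mul0r addr0 => uA2.
  by apply: res_sq_sqr; exact: vunit_vint (vunit_of_sqr uA2).
have [A0|nA] := eqVneq A 0.
  by move: uc => [_] /eqP; rewrite ec A0 expr0n add0r (negbTE (v_sqr_pi_unit nB vunit_U)).
have [tB | sA] := vint_divVmax nA nB.
  have eu : c = A ^+ 2 * (1 + pi * ((B / A) ^+ 2 * U)) by rewrite ec; field_nz.
  have uu : vunit v (1 + pi * ((B / A) ^+ 2 * U)).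
    by apply: vunitDmax; [exact: vunit1 | apply: vmax_piM; vint_tac].
  have uA : vunit v A.
    by apply: (vunit_of_sqrM uu); rewrite -eu.
  exists A; split; first exact: vunit_vint.
  have -> : c - A ^+ 2 = pi * (A ^+ 2 * (B / A) ^+ 2 * U) by rewrite eu; ring.
  apply: vmax_piM; apply: vintM; last by vint_tac.
  by apply: vintM; [apply/vintX/vunit_vint | exact: vintX].
exfalso; have sA' := proj1 (vmaxE _) sA.
have eu : c = B ^+ 2 * (pi * (U + A / B * (A / B / pi))) by rewrite ec; field_nz.
have uu : vunit v (U + A / B * (A / B / pi)).
  by apply: vunitDmax; [exact: vunit_U | rewrite mulrC; apply: vmaxM].
by move: uc => [_] /eqP; rewrite eu (negbTE (v_sqr_pi_unit nB uu)).
Qed.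

Lemma normM_Nr_omega_of_sqrt w : w ^+ 2 = - d -> normM (nr omega).
Proof.
move=> hw; have hd : d = - w ^+ 2 by rewrite hw opprK.
have nw : w != 0 by apply: contraNneq d_neq0 => w0; rewrite hd w0 expr0n oppr0.
rewrite Nr_omega.
have -> : d * U * Nw = (w * Nw) ^+ 2 * (1 + pi * (a ^+ 2 * d / Nw)).
  by rewrite hd; move: Nw_neq0 two_neq0 => nN n2; field_nz.
apply: normMM; first by apply: normM_sqr; rewrite mulf_neq0.
apply: normM_cong1; rewrite addrAC subrr add0r; apply: vmax_piM.
by apply: vintM; [vint_tac | exact: vunitV_vint vunit_Nw].
Qed.

Lemma res_sq_of_normM_Nr_omega : normM (nr omega) -> res_sq (- d).
Proof.
move=> So; have [z [iz mz]] := normM_unit_res_sq So vunit_Nr_omega.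
have iNwV : vint v Nw^-1 := vunitV_vint vunit_Nw.
exists (z / Nw); split; first exact: vintM.
rewrite Nr_omega in mz.
have -> : - d - (z / Nw) ^+ 2 = Nw^-1 ^+ 2 * (d * U * Nw - z ^+ 2) + pi * (a ^+ 2 * d ^+ 2 / Nw).
  by move: Nw_neq0 two_neq0 => nN n2; field_nz.
by apply: vmaxD; [apply: vmaxM => //; exact: vintX | apply: vmax_piM; vint_tac].
Qed.

Lemma NrN_eq_normM_iff : (forall c, NrN c <-> normM c) <-> res_sq (- (1 - 4%:R * eps)).
Proof.
have disc : - (1 - 4%:R * eps) = 2%:R ^+ 2 * - d by move: two_neq0 => n2; field_nz.
split=> [H | /(res_sq_sqrt (vunitN vunit_disc))[w [_ hw]]].
  rewrite disc; apply: res_sqM; first by apply: vintX; exact: vint_nat.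
    exact: res_sq_sqr (vint_nat 2).
  by apply: res_sq_of_normM_Nr_omega; apply/H; exact: NrN_Nr_omega.
have So : normM (nr omega).
  apply: (@normM_Nr_omega_of_sqrt (w / 2%:R)).
  by rewrite expr_div_n hw disc; move: two_neq0 four_neq0 => n2 n4; field_nz.
by move=> c; split; [exact: normM_of_NrN | exact: NrN_normM].
Qed.

Section Exponents.
Variable n : nat.
Hypotheses (piXr : pi ^+ n./2 = pr) (piXs : pi ^+ (n.-1)./2 = ps).

Lemma inO_inOrd y : inO v pi (pi * a) b n y <-> inOrd y.
Proof.
have n2 := two_neq0; rewrite /inO piXr piXs; split.
  case=> c0 [c1 [c2 [c3 [[i0 i1 i2 i3] ->]]]].
  exists (c0 + c1 * (pi * a) / 2%:R), c1, c2, c3; split; first by split => //; vint_tac.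
  by apply: quat_eq; rewrite /obasis /xab /delta /e2 /e3 /=; field_nz.
case=> c0 [c1 [c2 [c3 [[i0 i1 i2 i3] ->]]]].
exists (c0 - c1 * (pi * a) / 2%:R), c1, c2, c3; split; first by split => //; vint_tac.
by apply: quat_eq; rewrite /obasis /xab /delta /e2 /e3 /=; field_nz.
Qed.

Lemma NrNormalizer_NrN c : NrNormalizer v eps pi (pi * a) b n c <-> NrN c.
Proof.
split; case=> g [[h [gh hg hO]] ->]; exists g; split => //; exists h; split => // y.
  by rewrite -!inO_inOrd.
by rewrite !inO_inOrd.
Qed.

Lemma NmMunits_normM c : NmMunits eps pi (pi * a) b c <-> normM c.
Proof.
have n2 := two_neq0.
have NmE A B : NmM eps pi (pi * a) b A B = (A + B * (pi * a) / 2%:R) ^+ 2 + B ^+ 2 * (pi * U).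
  by rewrite /NmM /Trd /Nr qmulE /xab /=; field_nz.
split; case=> A [B [nAB ->]].
  exists (A + B * (pi * a) / 2%:R), B; rewrite NmE; split => //.
  by case: nAB => [nA|]; [have [->|] := eqVneq B 0; [left; rewrite !mul0r addr0|right] | right].
exists (A - B * (pi * a) / 2%:R), B; rewrite NmE; split; last by congr (_ ^+ 2 + _); field_nz.
by case: nAB => [nA|]; [have [->|] := eqVneq B 0; [left; rewrite !mul0r subr0|right] | right].
Qed.

Lemma NrNormalizer_eq_NmMunits_iff :
  (forall c, NrNormalizer v eps pi (pi * a) b n c <-> NmMunits eps pi (pi * a) b c) <->
  res_sq (- (1 - 4%:R * eps)).
Proof.
rewrite -NrN_eq_normM_iff; split=> H c.
  by rewrite -NrNormalizer_NrN -NmMunits_normM.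
by rewrite NrNormalizer_NrN NmMunits_normM.
Qed.

End Exponents.

End Order.

Lemma vunit_norm_of_nonsq e b : vint v b -> vint v e -> vunit v (1 - 4%:R * e) ->
    ~ (exists w, vunit v w /\ w ^+ 2 = 1 - 4%:R * e) ->
  vunit v (1 + b + b ^+ 2 * e).
Proof.
move=> ib ie ud nsq.
have iN : vint v (1 + b + b ^+ 2 * e).
  by apply: vintD; [apply: vintD => //; exact: vint1 | apply: vintM => //; exact: vintX].
have [mN|//] := vint_maxVunit iN.
have [mb|ub] := vint_maxVunit ib.
  case: (vunit_notmax vunit1).
  have -> : 1 = (1 + b + b ^+ 2 * e) - (1 + b * e) * b by ring.
  by apply: vmaxB => //; apply: vmaxM => //; apply: vintD; [exact: vint1 | exact: vintM].
(* if Nm(1 + b x1) is in p with b a unit, then 1 - 4e = ((2 + b)/b)^2 mod p *)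
case: nsq; apply: res_sq_sqrt => //.
have nb : b != 0 by case: ub.
exists ((2%:R + b) / b); split.
  by apply: vintM; [apply: vintD => //; exact: vint_nat | exact: vunitV_vint].
have -> : 1 - 4%:R * e - ((2%:R + b) / b) ^+ 2 = - (4%:R * (b ^+ 2)^-1 * (1 + b + b ^+ 2 * e)).
  by field.
apply/vmaxN/vmaxM => //; apply: vintM; first exact: vint_nat.
by apply: vunitV_vint; apply: vunit_sqr.
Qed.

Lemma minus1_sq_residueE : minus1_sq_residue v <-> res_sq (-1).
Proof.
split; case=> u [iu mu]; exists u; split => //.
  by rewrite (_ : -1 - u ^+ 2 = - (u ^+ 2 + 1)); [exact: vmaxN | ring].
by rewrite (_ : u ^+ 2 + 1 = - (-1 - u ^+ 2)); [exact: vmaxN | ring].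
Qed.

Lemma res_sq_disc_iff (split : bool) e :
    (if split then e = 0 else [/\ vunit v e, vunit v (1 - 4%:R * e) &
                                  ~ (exists w, vunit v w /\ w ^+ 2 = 1 - 4%:R * e)]) ->
  res_sq (- (1 - 4%:R * e)) <->
  (split /\ minus1_sq_residue v) \/ (~~ split /\ ~ minus1_sq_residue v).
Proof.
rewrite minus1_sq_residueE; case: split => [-> | [_ ud nsq]].
  by rewrite mulr0 subr0; split=> [h | [[_ h] | []]] //; left.
have u1 : vunit v (-1) by exact: vunitN vunit1.
have nsq' : ~ res_sq (1 - 4%:R * e) by move/(res_sq_sqrt ud).
split=> [h | [[] // | [_ n1]]].
  right; split => // m1; apply: nsq'.
  have -> : 1 - 4%:R * e = -1 * - (1 - 4%:R * e) by ring.
  by apply: res_sqM => //; exact: vunit_vint.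
by have := res_sq_nonsqM u1 ud n1 nsq'; rewrite mulN1r.
Qed.

Lemma pi_exponents n : (3 <= n)%N -> exists K L P : F,
  [/\ pi = K * L, [/\ vint v K, vint v L & vint v P], pi ^+ n./2 = K * K * L * P &
      pi ^+ (n.-1)./2 = K * L * P].
Proof.
move=> n3; pose P := pi ^+ ((n.-1)./2).-1.
have iP : vint v P by apply: vintX; exact: vint_pi.
have ePs : pi ^+ (n.-1)./2 = pi * P by rewrite -exprS prednK //; lia.
have [hr|hr] : n./2 = (n.-1)./2 \/ n./2 = ((n.-1)./2).+1 by lia.
  exists 1, pi, P; rewrite !mul1r hr; split => //.
  by split; [exact: vint1 | exact: vint_pi |].
exists pi, 1, P; rewrite !mulr1 hr exprS ePs mulrA; split => //.
by split; [exact: vint_pi | exact: vint1 |].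
Qed.

End Valuation.

Theorem lemma3p6 (F : fieldType) (v : F -> int) (HF : nondyadic_local_field v)
    (pi : F) (Hpi : pi != 0 /\ v pi = 1)
    (split : bool) (eps : F)
    (Heps : if split then eps = 0
            else [/\ vunit v eps, vunit v (1 - 4%:R * eps) &
                     ~ (exists w : F, vunit v w /\ w ^+ 2 = 1 - 4%:R * eps)])
    (n : nat) (Hn : (3 <= n)%N) (alpha beta : F)
    (Halpha : vmax v alpha) (Hbeta : vint v beta)
    (Hbeta1 : split -> vunit v (1 + beta)) :
  (forall c : F, NrNormalizer v eps pi alpha beta n c <-> NmMunits eps pi alpha beta c)
  <-> ((split /\ minus1_sq_residue v) \/ (~~ split /\ ~ minus1_sq_residue v)).
Proof.
rewrite -(res_sq_disc_iff HF Hpi Heps).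
have [a ia ->] := vmaxP HF Hpi Halpha.
have [ieps udisc uNw] : [/\ vint v eps, vunit v (1 - 4%:R * eps) &
                           vunit v (1 + beta + beta ^+ 2 * eps)].
  case: split Heps Hbeta1 => [-> /(_ isT) ub | [ue ud nsq] _].
    by rewrite mulr0 subr0 mulr0 addr0; split => //; [exact: vint0 | exact: vunit1 HF].
  have ieps := vunit_vint ue.
  by split => //; exact: (vunit_norm_of_nonsq HF Hpi Hbeta ieps ud nsq).
have [K [L [P [piKL [iK iL iP] piXr piXs]]]] := pi_exponents HF Hpi Hn.
exact: (NrNormalizer_eq_NmMunits_iff HF Hpi piKL ia Hbeta ieps iK iL iP udisc uNw piXr piXs).
Qed.
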